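(* Let $R$ be any ring. Every left $R$-module which is the kernel of a homomorphism between projective left $R$-modules is isomorphic to the inverse limit of an inverse system indexed by $\omega_1$ (the first uncountable ordinal) of projective left $R$-modules and surjective homomorphisms.
   Context: Rings are associative with unit, modules are unital. *)

From HB Require Import structures.
From mathcomp Require Import all_boot all_order all_algebra.
Set Implicit Arguments. Unset Strict Implicit. Unset Printing Implicit Defensive.
Import Order.TTheory GRing.Theory.
Local Open Scope ring_scope.

Definition surj (A B : Type) (g : A -> B) : Prop := forall y, exists x, g x = y.

Definition projective (R : pzRingType) (P : lmodType R) : Prop :=
  forall (A B : lmodType R) (g : {linear A -> B}) (h : {linear P -> B}),
    surj g -> exists k : {linear P -> A}, forall x, g (k x) = h x.

Definition is_kernel (R : pzRingType) (M P Q : lmodType R)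
  (f : {linear P -> Q}) (i : {linear M -> P}) : Prop :=
  injective i /\ (forall x, f x = 0 <-> exists m, i m = x).

Definition countable_pred (I : Type) (S : I -> Prop) : Prop :=
  exists c : I -> nat, forall x y, S x -> S y -> c x = c y -> x = y.

(* The totally ordered type I is order-isomorphic to omega_1: it is
   well-ordered, uncountable, and every proper initial segment is countable.
   (These properties characterize omega_1 up to order isomorphism.) *)
Definition omega1_like (d : Order.disp_t) (I : orderType d) : Prop :=
  [/\ (forall S : I -> Prop, (exists x, S x) ->
         exists2 x, S x & forall y, S y -> (x <= y)%O),
      ~ countable_pred (fun _ : I => True)
    & forall a : I, countable_pred (fun x => (x < a)%O)].

(* Inverse system over I: modules X a, bonding maps pi a b : X b -> X a
   (only meaningful for a <= b). *)
Definition inverse_system (R : pzRingType) (d : Order.disp_t) (I : orderType d)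
  (X : I -> lmodType R) (pi : forall a b : I, {linear X b -> X a}) : Prop :=
  (forall a x, pi a a x = x) /\
  (forall a b c, (a <= b)%O -> (b <= c)%O -> forall x, pi a b (pi b c x) = pi a c x).

(* M together with the cone phi is (isomorphic to) the inverse limit of the
   system: the induced linear map M -> {compatible families} is bijective. *)
Definition is_inverse_limit (R : pzRingType) (d : Order.disp_t) (I : orderType d)
  (X : I -> lmodType R) (pi : forall a b : I, {linear X b -> X a})
  (M : lmodType R) (phi : forall a, {linear M -> X a}) : Prop :=
  [/\ (forall a b, (a <= b)%O -> forall m, pi a b (phi b m) = phi a m),
      (forall m m', (forall a, phi a m = phi a m') -> m = m')
    & (forall x : forall a, X a,
         (forall a b, (a <= b)%O -> pi a b (x b) = x a) ->
         exists m, forall a, phi a m = x a)].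

(* For a in I let Lab a be the set of
   finite-to-one maps [0, a) -> nat ("labellings"); restriction Lab b -> Lab a
   is surjective for a <= b, because [0, b) is countable.  Put
     X a := pullback of f : P -> Q and of the augmentation Q^(Lab a) -> Q,
   a projective module since Q^(Lab a) is, with bonding maps the identity on P
   and the pushforward along restriction on Q^(Lab a); M maps to X a by
   m |-> (i m, 0).  The bonding maps are surjective.  The key point is that a
   compatible family of elements of the Q^(Lab a) vanishes: otherwise the
   (finite, nonempty) supports form a well-ordered inverse system with
   surjective maps, which has a thread (Koenig's lemma), and gluing a thread
   gives a map I -> nat that is finite-to-one below every point, forcing I to
   be countable.  Hence compatible families in the X a are constant elements
   of ker f = M. *)

From HB Require Import structures.
From mathcomp Require Import all_boot all_order all_algebra.
From mathcomp Require Import finmap boolp.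
From mathcomp.multinomials Require Import monalg.
Set Implicit Arguments. Unset Strict Implicit. Unset Printing Implicit Defensive.
Import Order.TTheory GRing.Theory.
Local Open Scope ring_scope.

Definition linmap (R : pzRingType) (U V : lmodType R) (f : U -> V) (fL : linear f)
  : {linear U -> V} := HB.pack f (GRing.isLinear.Build R U V *:%R f fL).

Section DirectSum.
Variables (R : pzRingType) (Q : lmodType R) (K : choiceType).

(* The direct sum Q^(K) of K copies of Q: finitely supported families,
   with R acting coefficientwise. *)
Definition dsum := {malg Q[K]}.
HB.instance Definition _ := GRing.Zmodule.on dsum.

Definition dsum_scale (a : R) (x : dsum) : dsum :=
  \sum_(k <- msupp x) << a *: x@_k *g k >>.

Lemma dsum_scaleE a x k : (dsum_scale a x)@_k = a *: x@_k.
Proof.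
rewrite /dsum_scale raddf_sum /= [in RHS](monalgE x) raddf_sum scaler_sumr /=.
by apply/eq_bigr=> i _; rewrite !mcoeffU scalerMnr.
Qed.

Lemma dsum_scaleA a b x : dsum_scale a (dsum_scale b x) = dsum_scale (a * b) x.
Proof. by apply/malgP=> k; rewrite !dsum_scaleE scalerA. Qed.
Lemma dsum_scale1 x : dsum_scale 1 x = x.
Proof. by apply/malgP=> k; rewrite !dsum_scaleE scale1r. Qed.
Lemma dsum_scaleDr a x y : dsum_scale a (x + y) = dsum_scale a x + dsum_scale a y.
Proof. by apply/malgP=> k; rewrite !(mcoeffD, dsum_scaleE) scalerDr. Qed.
Lemma dsum_scaleDl x a b : dsum_scale (a + b) x = dsum_scale a x + dsum_scale b x.
Proof. by apply/malgP=> k; rewrite !(mcoeffD, dsum_scaleE) scalerDl. Qed.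

HB.instance Definition _ := GRing.Zmodule_isLmodule.Build R dsum
  dsum_scaleA dsum_scale1 dsum_scaleDr dsum_scaleDl.

Lemma dsumZE a (x : dsum) k : (a *: x)@_k = a *: x@_k.
Proof. exact: dsum_scaleE. Qed.

Definition dsumU k (q : Q) : dsum := << q *g k >>.

Lemma dsumU_lin k : linear (dsumU k).
Proof.
move=> a x y; apply/malgP => j.
by rewrite mcoeffD dsumZE /dsumU !mcoeffU mulrnDl scalerMnr.
Qed.
HB.instance Definition _ k :=
  GRing.isLinear.Build R Q dsum *:%R (dsumU k) (dsumU_lin k).

Lemma dsum_eq_gen (V : zmodType) (G1 G2 : {additive dsum -> V}) :
  (forall k q, G1 (dsumU k q) = G2 (dsumU k q)) -> G1 =1 G2.
Proof. by move=> eqG x; rewrite [x]monalgE !raddf_sum; apply: eq_bigr. Qed.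

Section Extension.
Variables (V : lmodType R) (F : K -> {linear Q -> V}).

Definition dsum_ext (x : dsum) : V := \sum_(k <- msupp x) F k x@_k.

Lemma dsum_extw (x : dsum) (D : {fset K}) : (msupp x `<=` D)%fset ->
  dsum_ext x = \sum_(k <- D) F k x@_k.
Proof.
move=> sD; rewrite /dsum_ext (big_fset_incl _ sD) // => k _ kn.
by rewrite mcoeff_outdom // linear0.
Qed.

Lemma dsum_ext_lin : linear dsum_ext.
Proof.
move=> a x y.
pose D := (msupp x `|` msupp y `|` msupp (a *: x + y))%fset.
have sx : (msupp x `<=` D)%fset by rewrite /D -fsetUA fsubsetUl.
have sy : (msupp y `<=` D)%fset by rewrite /D fsetUC fsetUA fsubsetUr.
have sxy : (msupp (a *: x + y) `<=` D)%fset by rewrite /D fsubsetUr.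
rewrite (dsum_extw sx) (dsum_extw sy) (dsum_extw sxy) scaler_sumr -big_split.
by apply: eq_bigr => k _; rewrite mcoeffD dsumZE linearP.
Qed.

HB.instance Definition _ :=
  GRing.isLinear.Build R dsum V *:%R dsum_ext dsum_ext_lin.

Lemma dsum_extU k q : dsum_ext (dsumU k q) = F k q.
Proof.
rewrite /dsum_ext /dsumU msuppU.
case: eqP => [->|_]; first by rewrite big_nil linear0.
by rewrite big_seq_fset1 mcoeffUU.
Qed.

End Extension.

(* Q^(K) is projective when Q is: lift summand by summand. *)
Lemma dsum_projective : projective Q -> projective dsum.
Proof.
move=> projQ A B g h sg.
have lift k : exists L : {linear Q -> A}, forall q, g (L q) = h (dsumU k q).
  exact: projQ A B g (h \o dsumU k) sg.
pose L k := proj1_sig (cid (lift k)).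
have gL k q : g (L k q) = h (dsumU k q) by rewrite /L; case: cid.
exists (dsum_ext L : {linear _ -> _}); apply: (@dsum_eq_gen _ (g \o dsum_ext L) h) => k q.
by rewrite /= dsum_extU gL.
Qed.

End DirectSum.

Section Pushforward.
Variables (R : pzRingType) (Q : lmodType R).

Definition dmap (K1 K2 : choiceType) (h : K1 -> K2) : {linear dsum Q K1 -> dsum Q K2} :=
  dsum_ext (fun k => dsumU (h k) : {linear Q -> dsum Q K2}).

Lemma dmapU (K1 K2 : choiceType) (h : K1 -> K2) k q : dmap h (dsumU k q) = dsumU (h k) q.
Proof. exact: dsum_extU. Qed.

Lemma dmap_id (K : choiceType) (h : K -> K) : h =1 id -> dmap h =1 id.
Proof.
move=> hid; apply: (@dsum_eq_gen _ _ _ _ (dmap h) idfun) => k q.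
by rewrite /= dmapU hid.
Qed.

Lemma dmap_comp (K1 K2 K3 : choiceType) (h1 : K2 -> K3) (h2 : K1 -> K2) x :
  dmap h1 (dmap h2 x) = dmap (h1 \o h2) x.
Proof.
apply: (@dsum_eq_gen _ _ _ _ (dmap h1 \o dmap h2) (dmap (h1 \o h2))) => k q.
by rewrite /= !dmapU.
Qed.

Lemma dmap_coef (K1 K2 : choiceType) (h : K1 -> K2) x t :
  (dmap h x)@_t = \sum_(k <- msupp x | h k == t) x@_k.
Proof.
rewrite /= /dsum_ext raddf_sum [RHS]big_mkcond /=; apply: eq_bigr => k _.
by rewrite /dsumU mcoeffU; case: (h k == t).
Qed.

Lemma dmap_surj (K1 K2 : choiceType) (h : K1 -> K2) : surj h -> surj (dmap h).
Proof.
move=> sh y.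
have [g hg] : exists g : K2 -> K1, forall t, h (g t) = t.
  by exists (fun t => proj1_sig (cid (sh t))) => t; case: cid.
by exists (dmap g y); rewrite dmap_comp dmap_id // => t /=; rewrite hg.
Qed.

Definition aug (K : choiceType) : {linear dsum Q K -> Q} := dsum_ext (fun _ : K => idfun).

Lemma augU (K : choiceType) k q : aug K (dsumU k q) = q.
Proof. exact: dsum_extU. Qed.

Lemma aug_dmap (K1 K2 : choiceType) (h : K1 -> K2) x : aug K2 (dmap h x) = aug K1 x.
Proof.
apply: (@dsum_eq_gen _ _ _ _ (aug K2 \o dmap h) (aug K1)) => k q.
by rewrite /= dmapU !augU.
Qed.

End Pushforward.
Arguments dmap {R Q K1 K2} h.

Section Projectives.
Variable R : pzRingType.

Lemma projective_retract (X Z : lmodType R) (r : {linear X -> Z}) (e : {linear Z -> X}) :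
  (forall z, r (e z) = z) -> projective X -> projective Z.
Proof.
move=> re projX A B g h sg; have [k gk] := projX A B g (h \o r) sg.
by exists (k \o e) => z /=; rewrite gk /= re.
Qed.

Section Product.
Variables (P Y : lmodType R).

Definition inl_mod (p : P) : P * Y := (p, 0).
Definition inr_mod (y : Y) : P * Y := (0, y).
Lemma inl_mod_lin : linear inl_mod.
Proof. by move=> a p p'; rewrite /inl_mod; congr (_, _) => /=; rewrite scaler0 addr0. Qed.
Lemma inr_mod_lin : linear inr_mod.
Proof. by move=> a y y'; rewrite /inr_mod; congr (_, _) => /=; rewrite scaler0 addr0. Qed.
HB.instance Definition _ := GRing.isLinear.Build R P (P * Y)%type *:%R inl_mod inl_mod_lin.
HB.instance Definition _ := GRing.isLinear.Build R Y (P * Y)%type *:%R inr_mod inr_mod_lin.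

Lemma projective_prod : projective P -> projective Y -> projective (P * Y)%type.
Proof.
move=> projP projY A B g h sg.
have [k1 gk1] := projP A B g (h \o inl_mod) sg.
have [k2 gk2] := projY A B g (h \o inr_mod) sg.
have kL : linear (fun z : P * Y => k1 z.1 + k2 z.2).
  by move=> a z z' /=; rewrite !linearP addrACA scalerDr.
exists (linmap kL) => -[p y] /=; rewrite linearD gk1 gk2 /= -linearD.
by congr (h _); apply: injective_projections; [exact: addr0 | exact: add0r].
Qed.

End Product.

Section Pullback.
Variables (P Y Q : lmodType R) (f : {linear P -> Q}) (s : {linear Y -> Q}).

Definition pb_pred : pred (P * Y)%type := fun z => f z.1 == s z.2.
Lemma pb_closed : GRing.subsemimod_closed pb_pred.
Proof.
split; first split.
- by rewrite !unfold_in /pb_pred /= !linear0.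
- by move=> [p y] [p' y']; rewrite !unfold_in /pb_pred /= !linearD => /eqP-> /eqP->.
- by move=> a [p y]; rewrite !unfold_in /pb_pred /= !linearZ => /eqP->.
Qed.
HB.instance Definition _ := GRing.isSubmodClosed.Build R (P * Y)%type pb_pred pb_closed.
Definition pullback := {z : (P * Y)%type | pb_pred z}.
HB.instance Definition _ := [isSub for (@proj1_sig _ _ : pullback -> _)].
HB.instance Definition _ := [Choice of pullback by <:].
HB.instance Definition _ := [SubChoice_isSubLmodule of pullback by <:].

Definition pb_mk (p : P) (y : Y) (fs : f p = s y) : pullback :=
  exist pb_pred (p, y) (introT eqP fs).
Lemma pb_eq (w : pullback) : f (val w).1 = s (val w).2.
Proof. exact: eqP (valP w). Qed.

(* With Q projective and s surjective, s has a linear section sc, and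
   (p, y) |-> (p, y + sc (f p - s y)) retracts P * Y onto the pullback. *)
Lemma pullback_projective :
  projective P -> projective Y -> projective Q -> surj s -> projective pullback.
Proof.
move=> projP projY projQ ss.
have [sc ssc] := projQ Y Q s idfun ss.
have rP (z : P * Y) : f z.1 = s (z.2 + sc (f z.1 - s z.2)).
  by rewrite linearD ssc addrC subrK.
pose r z : pullback := pb_mk (rP z).
have rL : linear r.
  move=> a z z'; apply: val_inj; rewrite [in RHS]linearP /=.
  apply: injective_projections => //=.
  by rewrite (linearP f) (linearP s) opprD addrACA -scalerBr linearP scalerDr addrACA.
apply: (projective_retract (r := linmap rL) (e := val)) => //; last first.
  exact: projective_prod.
by move=> w; apply: val_inj; rewrite /= pb_eq subrr linear0 addr0; case: (val w).
Qed.

End Pullback.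
End Projectives.

Section Labellings.
Variables (d : Order.disp_t) (I : orderType d).
Local Open Scope order_scope.

Definition finite_fibers (a : I) (s : I -> nat) : Prop :=
  forall n, exists l : seq I, forall c, c < a -> s c = n -> c \in l.

(* Labellings of the initial segment [0, a): finite-to-one maps to nat,
   extended by 0 beyond a. *)
Definition labelling (a : I) (s : I -> nat) : Prop :=
  (forall c, ~~ (c < a) -> s c = 0%N) /\ finite_fibers a s.

Definition Lab (a : I) := {s : I -> nat | labelling a s}.
HB.instance Definition _ a := gen_eqMixin (Lab a).
HB.instance Definition _ a := gen_choiceMixin (Lab a).

Lemma Lab_eq a (s t : Lab a) : sval s = sval t -> s = t.
Proof.
by case: s t => [s hs] [t ht] /= est; subst t; congr exist; exact: Prop_irrelevance.
Qed.

Hypothesis segment_countable : forall a : I, countable_pred (fun x => x < a).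

Definition enc (a : I) : I -> nat := proj1_sig (cid (segment_countable a)).
Lemma enc_inj a x y : x < a -> y < a -> enc a x = enc a y -> x = y.
Proof. by rewrite /enc; case: cid => e he /=; apply: he. Qed.

Definition extend (a : I) (B : pred I) (s : I -> nat) : I -> nat :=
  fun c => if c < a then (if B c then s c else enc a c) else 0%N.

Lemma extend_labelling a (B : pred I) s :
  (forall n, exists l : seq I, forall c, c < a -> B c -> s c = n -> c \in l) ->
  labelling a (extend a B s).
Proof.
move=> sfib; split=> [c /negbTE ca|n]; first by rewrite /extend ca.
have [l hl] := sfib n.
case: (pselect (exists c, [/\ c < a, ~~ B c & enc a c = n])) => [[c0 [c0a _ e0]]|Hn].
  exists (c0 :: l) => c ca; rewrite /extend ca inE.
  case: ifP => [Bc /(hl c ca Bc) -> //|_ ec]; first by rewrite orbT.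
  by rewrite (enc_inj ca c0a (etrans ec (esym e0))) eqxx.
exists l => c ca; rewrite /extend ca; case: ifP => [Bc|/negbT nBc ec]; first exact: hl.
by case: Hn; exists c.
Qed.

Lemma res_labelling a b (s : Lab b) : labelling a (extend a [pred c | c < b] (sval s)).
Proof.
apply: extend_labelling => n; have [l hl] := (proj2 (svalP s)) n.
by exists l => c _ cb; apply: hl.
Qed.

(* Restriction of labellings from [0, b) to [0, a) (for a > b the missing
   part is filled with enc a, which makes res total). *)
Definition res (a b : I) (s : Lab b) : Lab a := exist _ _ (res_labelling a s).
Arguments res : clear implicits.

Lemma lab0_labelling a : labelling a (extend a pred0 (fun=> 0%N)).
Proof. by apply: extend_labelling => n; exists [::]. Qed.
Definition lab0 (a : I) : Lab a := exist _ _ (lab0_labelling a).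

Lemma res_val a b (s : Lab b) c : c < a -> c < b -> sval (res a b s) c = sval s c.
Proof. by rewrite /= /extend => -> /= ->. Qed.

Lemma res_id a (s : Lab a) : res a a s = s.
Proof.
apply: Lab_eq; apply: funext => c /=; rewrite /extend.
by case: s => s [s0 _] /=; case: ifP => [->|/negbT /s0 ->].
Qed.

Lemma res_comp a b c (s : Lab c) : a <= b -> b <= c -> res a b (res b c s) = res a c s.
Proof.
move=> ab bc; apply: Lab_eq; apply: funext => x /=; rewrite /extend /=.
case: ifP => // xa; have xb := lt_le_trans xa ab.
by rewrite xb (lt_le_trans xb bc).
Qed.

Lemma res_surj a b : a <= b -> surj (res a b).
Proof.
move=> ab t; exists (res b a t); apply: Lab_eq; apply: funext => c /=.
rewrite /extend /=; case: t => t [t0 _] /=.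
by case: ifP => [ca|/negbT /t0 ->]; rewrite ?(lt_le_trans ca ab) /= ?ca.
Qed.

End Labellings.
Arguments res {d I} segment_countable a b s.

Section Threads.
Variables (d : Order.disp_t) (I : orderType d).
Local Open Scope order_scope.
Local Unset Implicit Arguments.
Hypothesis well_ordered : forall S : I -> Prop, (exists x, S x) ->
  exists2 x, S x & forall y, S y -> x <= y.

Lemma wf_lt : well_founded (fun x y : I => x < y).
Proof.
move=> x; apply: contrapT => nacc.
have [m nm mmin] := well_ordered _ (ex_intro (fun z => ~ Acc (fun x y : I => x < y) z) x nacc).
apply: nm; constructor => z zm; apply: contrapT => nz.
by have := mmin z nz; rewrite leNgt zm.
Qed.

Lemma foldr_max_between (lo hi x0 : I) (l : seq I) :
  lo <= x0 < hi -> (forall x, x \in l -> lo <= x < hi) ->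
  [/\ lo <= foldr Order.max x0 l, foldr Order.max x0 l < hi
    & forall x, x \in l -> x <= foldr Order.max x0 l].
Proof.
move=> /andP [lo0 hi0]; elim: l => [|y l IHl] inl /=; first by split.
have /andP [loy hiy] := inl y (mem_head y l).
have [lom mhi le_m] := IHl (fun x xl => inl x (mem_behead (s := y :: l) xl)).
split; [by rewrite le_max loy | by rewrite gt_max hiy |].
by move=> x; rewrite inE le_max => /orP [/eqP ->|/le_m ->]; rewrite ?lexx ?orbT.
Qed.

(* A well-ordered inverse system of finite sets S b (listed as sequences),
   nonempty and with surjective bonding maps from a0 on, has a thread
   (Koenig's lemma along a well-order). *)
Variables (T : I -> eqType) (r : forall a b, T b -> T a).
Hypothesis r_comp : forall a b c u, a <= b -> b <= c -> r a b (r b c u) = r a c u.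
Variables (a0 : I) (S : forall b, seq (T b)) (dflt : forall b, T b).
Hypothesis S_a0 : exists t, t \in S a0.
Hypothesis S_lift : forall a b t, a0 <= a -> a <= b -> t \in S a ->
  exists2 u, u \in S b & r a b u = t.

Definition compatible b (rec : forall a, a < b -> T a) (u : T b) : Prop :=
  u \in S b /\ forall a (ab : a < b), a0 <= a -> r a b u = rec a ab.

Definition thread_step b (rec : forall a, a < b -> T a) : T b :=
  match pselect (exists u, compatible b rec u) with
  | left e => proj1_sig (cid e)
  | right _ => dflt b
  end.

Definition thread := Fix wf_lt T thread_step.

Lemma threadE b : thread b = thread_step b (fun a _ => thread a).
Proof.
rewrite /thread Fix_eq // => x f g fg; suff -> : f = g by [].
by apply: functional_extensionality_dep => z; apply: functional_extensionality_dep.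
Qed.

(* If no element of S b is compatible, every u in S b fails at some
   a_u in [a0, b); above the largest a_u, the thread lifts to S b, which
   gives an element that does not fail there: contradiction. *)
Lemma thread_spec b : a0 <= b ->
  thread b \in S b /\ forall a, a < b -> a0 <= a -> r a b (thread b) = thread a.
Proof.
elim/(well_founded_ind wf_lt): b => b IH a0b.
suff [u cu] : exists u, compatible b (fun a (_ : a < b) => thread a) u.
  rewrite threadE /thread_step; case: pselect => [e|[]]; last by exists u.
  by case: cid => v [vS vc] /=; split=> // a ab; apply: vc.
apply: contrapT => ncomp.
pose fail u := if pselect (exists a, [/\ a < b, a0 <= a & r a b u != thread a])
  is left e then proj1_sig (cid e) else a0.
have failP u : u \in S b -> [/\ fail u < b, a0 <= fail u & r (fail u) b u != thread (fail u)].
  move=> uS; rewrite /fail; case: pselect => [e|nf]; first by case: cid.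
  case: ncomp; exists u; split=> // a ab a0a; apply: contrapT => ne.
  by apply: nf; exists a; split=> //; apply/eqP.
have [u0 u0S] : exists u, u \in S b.
  by have [t tS] := S_a0; have [u uS _] := S_lift _ _ _ (lexx a0) a0b tS; exists u.
have failI u : u \in S b -> a0 <= fail u < b.
  by move=> /failP [? ? _]; apply/andP.
pose c := foldr Order.max (fail u0) [seq fail u | u <- S b].
have [a0c cb failc] : [/\ a0 <= c, c < b & forall x, x \in [seq fail u | u <- S b] -> x <= c].
  by apply: foldr_max_between (failI u0 u0S) _ => _ /mapP [u uS ->]; apply: failI.
have [thc _] := IH _ cb a0c.
have [u uS ruc] := S_lift _ _ _ a0c (ltW cb) thc.
have [_ a0f fail_u] := failP u uS; apply/(negP fail_u)/eqP.
move: (failc _ (map_f fail uS)); rewrite le_eqVlt => /orP [/eqP->|fc]; first by rewrite ruc.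
by rewrite -(r_comp _ _ _ u (ltW fc) (ltW cb)) ruc (proj2 (IH _ cb a0c)).
Qed.

End Threads.
Arguments thread {d I} well_ordered {T} r a0 S dflt.
Arguments thread_spec {d I} well_ordered {T r} r_comp {a0 S} dflt S_a0 S_lift {b}.

(* In any total order, a map g : I -> nat all of whose fibres are finite
   below each point is injective up to a finite rank, so I is countable:
   c |-> (g c, number of x < c with g x = g c) is injective. *)
Lemma countable_of_fibers (d : Order.disp_t) (I : orderType d) (g : I -> nat) :
  (forall c, exists l : seq I, forall x, (x < c)%O -> g x = g c -> x \in l) ->
  countable_pred (fun _ : I => True).
Proof.
move=> fib; pose L c := proj1_sig (cid (fib c)).
have memL c x : (x < c)%O -> g x = g c -> x \in L c by rewrite /L; case: cid => l hl; apply: hl.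
pose F c := undup [seq x <- L c | (x < c)%O && (g x == g c)].
have memF c x : (x \in F c) = (x < c)%O && (g x == g c).
  by rewrite mem_undup mem_filter andb_idr // => /andP [xc /eqP]; apply: memL.
have rank_lt x z : (x < z)%O -> g x = g z -> (size (F x) < size (F z))%N.
  move=> xz gxz; rewrite -[(size (F x)).+1]/(size (x :: F x)).
  apply: uniq_leq_size => [|w]; first by rewrite /= memF ltxx undup_uniq.
  rewrite inE !memF => /orP [/eqP ->|/andP [wx /eqP gw]]; first by rewrite xz gxz eqxx.
  by rewrite (lt_trans wx xz) gw gxz eqxx.
exists (fun c => choice.pickle (g c, size (F c))) => x z _ _ /(pcan_inj choice.pickleK) [gxz sxz].
apply: contrapT => /eqP nxz; case/orP: (lt_total nxz) => [xz|zx].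
  by move: (rank_lt _ _ xz gxz); rewrite sxz ltnn.
by move: (rank_lt _ _ zx (esym gxz)); rewrite sxz ltnn.
Qed.

Section Omega1.
Variables (d : Order.disp_t) (I : orderType d).
Hypothesis hI : omega1_like I.
Local Open Scope order_scope.

Lemma omega1_well_ordered (S : I -> Prop) :
  (exists x, S x) -> exists2 x, S x & forall y, S y -> x <= y.
Proof. by case: hI => wo _ _; apply: wo. Qed.
Lemma omega1_uncountable : ~ countable_pred (fun _ : I => True).
Proof. by case: hI. Qed.
Lemma omega1_segment a : countable_pred (fun x : I => x < a).
Proof. by case: hI => _ _; apply. Qed.

Local Notation rs := (res omega1_segment).

Lemma omega1_inhabited : exists a : I, True.
Proof.
apply: contrapT => nI; apply: omega1_uncountable; exists (fun=> 0%N) => x.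
by case: nI; exists x.
Qed.

(* omega_1 has no largest element: [0, c] would be countable. *)
Lemma exists_above (c : I) : exists b, c < b.
Proof.
apply: contrapT => nb; have lec z : z <= c by rewrite leNgt; apply/negP => cz; apply: nb; exists z.
have [e e_inj] := omega1_segment c.
apply: omega1_uncountable; exists (fun x => if x == c then 0%N else (e x).+1) => x y _ _.
case: eqP => [->|xc]; case: eqP => [->|yc] // [].
by apply: e_inj; rewrite lt_neqAle lec andbT; apply/eqP.
Qed.

(* The inverse system of labellings has no thread: gluing a thread would
   give a map I -> nat with finite fibres below every point. *)
Lemma no_coherent_thread (a0 : I) (t : forall b, Lab b) :
  ~ (forall a b, a0 <= a -> a < b -> rs a b (t b) = t a).
Proof.
move=> coh; pose B c := proj1_sig (cid (exists_above (Order.max c a0))).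
have cB c : c < B c /\ a0 < B c by apply/andP; rewrite -gt_max /B; case: cid.
pose g c := sval (t (B c)) c.
have gE c b : c < b -> a0 < b -> g c = sval (t b) c.
  have [cBc a0Bc] := cB c; rewrite /g => cb a0b.
  case: (ltgtP (B c) b) => [Bb|bB|-> //].
    by rewrite -(coh _ _ (ltW a0Bc) Bb) res_val.
  by rewrite -(coh _ _ (ltW a0b) bB) res_val.
apply: omega1_uncountable; apply: (countable_of_fibers (g := g)) => c.
have [cBc a0Bc] := cB c; have [l hl] := (proj2 (svalP (t (B c)))) (g c).
exists l => x xc gx; have xB := lt_trans xc cBc.
by apply: hl => //; rewrite -gE.
Qed.

(* Main lemma: a family y a in Q^(Lab a), compatible under the maps induced
   by restriction, vanishes.  Otherwise the supports (finite, nonempty,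
   surjecting onto each other) would carry a thread. *)
Lemma compatible_family_vanishes (R : pzRingType) (Q : lmodType R)
    (y : forall a : I, dsum Q (Lab a)) :
  (forall a b, a <= b -> dmap (rs a b) (y b) = y a) -> forall a, y a = 0.
Proof.
move=> compat a0; apply: contrapT => ya0.
have [t0 t0S] : exists t, t \in msupp (y a0).
  apply: contrapT => nt; apply: ya0; apply/malgP => k.
  by rewrite mcoeff0 mcoeff_outdom //; apply/negP => kS; apply: nt; exists k.
have lift a b t : a0 <= a -> a <= b -> t \in msupp (y a) ->
    exists2 u, u \in msupp (y b) & rs a b u = t.
  move=> _ ab; rewrite -mcoeff_neq0 -(compat _ _ ab) dmap_coef => ne.
  apply: contrapT => nu; move: ne; rewrite big1_seq ?eqxx // => u /andP [/eqP ut uS].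
  by case: nu; exists u.
pose th := thread omega1_well_ordered rs a0 (fun b => msupp (y b)) (lab0 omega1_segment).
apply: (@no_coherent_thread a0 th) => a b a0a ab.
have [_ coh] := thread_spec omega1_well_ordered (@res_comp _ _ omega1_segment)
  (lab0 omega1_segment) (ex_intro _ t0 t0S) lift (le_trans a0a (ltW ab)).
exact: coh.
Qed.

End Omega1.

Section System.
Variables (R : pzRingType) (M P Q : lmodType R).
Variables (f : {linear P -> Q}) (i : {linear M -> P}).
Variables (d : Order.disp_t) (I : orderType d) (hI : omega1_like I).
Local Open Scope order_scope.
Local Notation rs := (res (omega1_segment hI)).

Definition X (a : I) : lmodType R := pullback f (aug Q (Lab a)).

Lemma bond_eq a b (w : X b) : f (val w).1 = aug Q (Lab a) (dmap (rs a b) (val w).2).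
Proof. by rewrite aug_dmap pb_eq. Qed.

Definition bond_fun a b (w : X b) : X a := pb_mk (bond_eq a w).
Lemma bond_lin a b : linear (@bond_fun a b).
Proof. by move=> c w w'; apply: val_inj => /=; rewrite linearP. Qed.
Definition bond a b : {linear X b -> X a} := linmap (@bond_lin a b).

Lemma val_bond a b (w : X b) : val (bond a b w) = ((val w).1, dmap (rs a b) (val w).2).
Proof. by []. Qed.

Lemma bond_system : inverse_system bond.
Proof.
split=> [a w|a b c ab bc w]; apply: val_inj; rewrite !val_bond.
  by rewrite dmap_id; [case: (val w) | move=> t; apply: res_id].
by rewrite dmap_comp; congr (_, dmap _ _); apply: funext => t /=; rewrite res_comp.
Qed.

Lemma bond_projective a : projective P -> projective Q -> projective (X a).
Proof.
move=> projP projQ; apply: pullback_projective => //; first exact: dsum_projective.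
by move=> q; exists (dsumU (lab0 (omega1_segment hI) a) q); rewrite augU.
Qed.

Lemma bond_surj a b : a <= b -> surj (bond a b).
Proof.
move=> ab w; have [y dy] := dmap_surj (res_surj (omega1_segment hI) ab) (val w).2.
have fy : f (val w).1 = aug Q (Lab b) y by rewrite -(aug_dmap (rs a b)) dy pb_eq.
by exists (pb_mk fy); apply: val_inj; rewrite val_bond /= dy -surjective_pairing.
Qed.

Hypothesis fi0 : forall m, f (i m) = 0.

Lemma cone_eq (a : I) m : f (i m) = aug Q (Lab a) 0.
Proof. by rewrite fi0 linear0. Qed.
Definition cone_fun (a : I) m : X a := pb_mk (cone_eq a m).
Lemma cone_lin a : linear (cone_fun a).
Proof.
by move=> c m m'; apply: val_inj; apply: injective_projections; rewrite /= ?linearP ?scaler0 ?addr0.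
Qed.
Definition cone a : {linear M -> X a} := linmap (cone_lin a).

Lemma val_cone a m : val (cone a m) = (i m, 0).
Proof. by []. Qed.

(* M is the limit: a compatible family has vanishing Q^(Lab a)-components
   (compatible_family_vanishes), and a constant P-component in ker f. *)
Lemma cone_limit : injective i -> (forall p, f p = 0 -> exists m, i m = p) ->
  is_inverse_limit bond cone.
Proof.
move=> iinj ker; have [a0 _] := omega1_inhabited hI; split.
- by move=> a b ab m; apply: val_inj; rewrite val_bond !val_cone /= linear0.
- by move=> m m' /(_ a0) /(congr1 val); rewrite !val_cone => -[/iinj].
move=> x xc.
have y0 : forall a, (val (x a)).2 = 0.
  apply: (@compatible_family_vanishes _ _ hI _ _ (fun a => (val (x a)).2)) => a b ab.
  by rewrite -(xc a b ab) val_bond.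
have p_const a : (val (x a)).1 = (val (x a0)).1.
  by case/orP: (le_total a a0) => h; rewrite -(xc _ _ h) val_bond.
have [m im] : exists m, i m = (val (x a0)).1 by apply: ker; rewrite pb_eq y0 linear0.
exists m => a; apply: val_inj; rewrite val_cone im -(p_const a) -(y0 a).
by case: (val (x a)).
Qed.

End System.

Theorem mainTheorem14 (R : pzRingType) (M P Q : lmodType R)
  (f : {linear P -> Q}) (i : {linear M -> P}) :
  projective P -> projective Q -> is_kernel f i ->
  forall (d : Order.disp_t) (I : orderType d), omega1_like I ->
  exists (X : I -> lmodType R) (pi : forall a b : I, {linear X b -> X a})
         (phi : forall a, {linear M -> X a}),
    [/\ inverse_system pi,
        (forall a, projective (X a)),
        (forall a b, (a <= b)%O -> surj (pi a b))
      & is_inverse_limit pi phi].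
Proof.
move=> projP projQ [iinj ker] d I hI.
have fi0 m : f (i m) = 0 by apply/ker; exists m.
exists (X f (I := I)), (bond f hI), (cone fi0); split.
- exact: bond_system.
- by move=> a; apply: bond_projective.
- exact: bond_surj.
- by apply: cone_limit => // p /ker.
Qed.
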